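(* Let $f:[0,1]\to\mathbb R$, $f(x)=x\log^2 x$ (with $f(0)=0$), and $\varphi(x)=\sqrt{x(1-x)}$. Then the second-order Ditzian–Totik modulus of smoothness satisfies $\omega^2_\varphi(f,t)=\mathcal O\big(t^2\log(1/t)\big)$ as $t\to0^+$.
   Context: For a continuous $f:[0,1]\to\mathbb R$ and $t>0$, $\omega^2_\varphi(f,t)=\sup\big\{|f(u)+f(v)-2f(\tfrac{u+v}{2})| : (u,v)\in[0,1]^2,\ |u-v|\le 2t\,\varphi(\tfrac{u+v}{2})\big\}$. *)

From Stdlib Require Import Reals Lra.
From Coquelicot Require Import Coquelicot.
Open Scope R_scope.

Definition fxlog2 (x : R) : R := if Req_EM_T x 0 then 0 else x * (ln x) ^ 2.

Definition phiDT (x : R) : R := sqrt (x * (1 - x)).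

Definition DT_values (f phi : R -> R) (t : R) (y : R) : Prop :=
  exists u v : R, 0 <= u <= 1 /\ 0 <= v <= 1 /\
    Rabs (u - v) <= 2 * t * phi ((u + v) / 2) /\
    y = Rabs (f u + f v - 2 * f ((u + v) / 2)).

Definition omega2_phi (f phi : R -> R) (t : R) : Rbar :=
  Lub_Rbar (DT_values f phi t).

(** Put m = (u+v)/2 and write x ln^2 x = x ln^2 m + 2 ln m * x ln(x/m) + x ln^2(x/m).
    The terms linear in x cancel in the second difference, leaving
    2 ln m * P + Q with P = sum x ln(x/m) and Q = sum x ln^2(x/m) over x = u, v.
    The elementary bounds 1 - 1/y <= ln y <= y - 1 give 0 <= P <= S and 0 <= Q <= 4 S,
    where S = (u-v)^2/(2m).  Admissibility of (u, v) gives S <= 2 t^2 and S <= 2m,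
    and -ln m <= 2 ln(1/t) + t^2/m absorbs the logarithmic factor, so the
    second difference is at most 20 t^2 ln(1/t) once t < 1/e. *)

From Stdlib Require Import Reals Lra Psatz.
From Coquelicot Require Import Coquelicot.
Open Scope R_scope.

Lemma ln_le_sub_1 x : 0 < x -> ln x <= x - 1.
Proof.
  intros Hx. pose proof (exp_ineq1_le (ln x)) as H. rewrite exp_ln in H; lra.
Qed.

Lemma one_sub_inv_le_ln x : 0 < x -> 1 - / x <= ln x.
Proof.
  intros Hx. pose proof (ln_le_sub_1 (/ x) (Rinv_0_lt_compat _ Hx)) as H.
  rewrite ln_Rinv in H; lra.
Qed.

Lemma fxlog2_eq x : fxlog2 x = x * ln x ^ 2.
Proof. unfold fxlog2. destruct (Req_EM_T x 0); [subst; ring | reflexivity]. Qed.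

Lemma xln_div_bounds x m : 0 <= x -> 0 < m ->
  x - m <= x * ln (x / m) <= x * (x - m) / m.
Proof.
  intros Hx Hm. destruct (Req_dec x 0) as [->|Hx0].
  { unfold Rdiv. rewrite !Rmult_0_l. lra. }
  assert (Hy : 0 < x / m) by (apply Rdiv_lt_0_compat; lra).
  pose proof (ln_le_sub_1 _ Hy). pose proof (one_sub_inv_le_ln _ Hy).
  split.
  - replace (x - m) with (x * (1 - / (x / m))) by (field; lra).
    apply Rmult_le_compat_l; lra.
  - replace (x * (x - m) / m) with (x * (x / m - 1)) by (field; lra).
    apply Rmult_le_compat_l; lra.
Qed.

Lemma mul_ln_sqr_le y : 0 < y <= 2 -> y * ln y ^ 2 <= 4 * (1 - y) ^ 2.
Proof.
  intros Hy. destruct (Rle_dec 1 y) as [Hy1|Hy1].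
  - pose proof (ln_le_sub_1 _ (proj1 Hy)).
    assert (0 <= ln y) by (rewrite <- ln_1; apply ln_le; lra).
    nra.
  - (* for y < 1 pass to s = sqrt y, where s ln s >= s - 1 controls y ln^2 y = 4 (s ln s)^2 *)
    set (s := sqrt y).
    assert (Hs : 0 < s) by (apply sqrt_lt_R0; lra).
    assert (Hss : s * s = y) by (apply sqrt_sqrt; lra).
    assert (Hs1 : s < 1) by nra.
    assert (Hlog : y * ln y ^ 2 = 4 * (s * ln s) ^ 2)
      by (rewrite <- Hss, ln_mult by lra; ring).
    pose proof (one_sub_inv_le_ln _ Hs). pose proof (ln_le_sub_1 _ Hs).
    assert (s - 1 <= s * ln s)
      by (replace (s - 1) with (s * (1 - / s)) by (field; lra); nra).
    assert (s * ln s <= 0) by nra.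
    assert ((s * ln s) ^ 2 <= (1 - s) ^ 2) by nra.
    rewrite Hlog, <- Hss. nra.
Qed.

Lemma xln_div_sqr_le x m : 0 <= x <= 2 * m -> 0 < m ->
  x * ln (x / m) ^ 2 <= 4 * (x - m) ^ 2 / m.
Proof.
  intros Hx Hm. destruct (Req_dec x 0) as [->|Hx0].
  { replace (4 * (0 - m) ^ 2 / m) with (4 * m) by (field; lra). lra. }
  assert (Hy : 0 < x / m <= 2).
  { split; [apply Rdiv_lt_0_compat | apply Rle_div_l]; lra. }
  replace (x * ln (x / m) ^ 2) with (m * (x / m * ln (x / m) ^ 2)) by (field; lra).
  replace (4 * (x - m) ^ 2 / m) with (m * (4 * (1 - x / m) ^ 2)) by (field; lra).
  apply Rmult_le_compat_l; [lra | exact (mul_ln_sqr_le _ Hy)].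
Qed.

Lemma xln_sqr_expand x m : 0 <= x -> 0 < m ->
  x * ln x ^ 2 = x * ln m ^ 2 + 2 * ln m * (x * ln (x / m)) + x * ln (x / m) ^ 2.
Proof.
  intros Hx Hm. destruct (Req_dec x 0) as [->|Hx0]; [ring|].
  rewrite ln_div by lra. ring.
Qed.

Lemma fxlog2_second_difference u v m : 0 <= u -> 0 <= v -> 0 < m -> u + v = 2 * m ->
  fxlog2 u + fxlog2 v - 2 * fxlog2 m
  = 2 * ln m * (u * ln (u / m) + v * ln (v / m))
    + (u * ln (u / m) ^ 2 + v * ln (v / m) ^ 2).
Proof.
  intros Hu Hv Hm Huv.
  rewrite !fxlog2_eq, (xln_sqr_expand u m), (xln_sqr_expand v m) by lra.
  replace v with (2 * m - u) by lra. ring.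
Qed.

Lemma fxlog2_second_difference_le u v m : 0 <= u -> 0 <= v -> 0 < m -> u + v = 2 * m ->
  Rabs (fxlog2 u + fxlog2 v - 2 * fxlog2 m)
  <= (4 + 2 * Rabs (ln m)) * ((u - v) ^ 2 / (2 * m)).
Proof.
  intros Hu Hv Hm Huv. rewrite (fxlog2_second_difference u v m) by assumption.
  set (P := u * ln (u / m) + v * ln (v / m)).
  set (Q := u * ln (u / m) ^ 2 + v * ln (v / m) ^ 2).
  set (S := (u - v) ^ 2 / (2 * m)).
  assert (HP : 0 <= P <= S).
  { pose proof (xln_div_bounds u m Hu Hm). pose proof (xln_div_bounds v m Hv Hm).
    assert (u * (u - m) / m + v * (v - m) / m = S)
      by (unfold S; replace v with (2 * m - u) by lra; field; lra).
    unfold P; lra. }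
  assert (HQ : 0 <= Q <= 4 * S).
  { pose proof (xln_div_sqr_le u m ltac:(lra) Hm).
    pose proof (xln_div_sqr_le v m ltac:(lra) Hm).
    assert (4 * (u - m) ^ 2 / m + 4 * (v - m) ^ 2 / m = 4 * S)
      by (unfold S; replace v with (2 * m - u) by lra; field; lra).
    assert (0 <= u * ln (u / m) ^ 2) by (apply Rmult_le_pos; [lra | apply pow2_ge_0]).
    assert (0 <= v * ln (v / m) ^ 2) by (apply Rmult_le_pos; [lra | apply pow2_ge_0]).
    unfold Q; lra. }
  pose proof (Rabs_pos (ln m)).
  eapply Rle_trans; [apply Rabs_triang|].
  rewrite !Rabs_mult, (Rabs_right 2), (Rabs_right P), (Rabs_right Q) by lra.
  nra.
Qed.

Lemma admissible_sqr_le t u v m : 0 <= m <= 1 ->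
  Rabs (u - v) <= 2 * t * phiDT m -> (u - v) ^ 2 <= 4 * t ^ 2 * (m * (1 - m)).
Proof.
  unfold phiDT. intros Hm Huv.
  assert (Hmm : 0 <= m * (1 - m)) by nra.
  pose proof (sqrt_sqrt _ Hmm). pose proof (Rabs_pos (u - v)).
  rewrite <- pow2_abs.
  replace (4 * t ^ 2 * (m * (1 - m)))
    with ((2 * t * sqrt (m * (1 - m))) ^ 2) by (simpl; nra).
  apply pow_incr; lra.
Qed.

Lemma neg_ln_le t m : 0 < t -> 0 < m -> - ln m <= 2 * ln (1 / t) + t ^ 2 / m.
Proof.
  intros Ht Hm.
  pose proof (ln_le_sub_1 (t ^ 2 / m) ltac:(apply Rdiv_lt_0_compat; nra)) as H.
  rewrite ln_div in H by nra.
  replace (t ^ 2) with (t * t) in H at 1 by ring.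
  rewrite ln_mult in H by lra.
  unfold Rdiv at 1. rewrite Rmult_1_l, ln_Rinv by lra. lra.
Qed.

Lemma one_lt_ln_inv t : 0 < t < exp (-1) -> 1 < ln (1 / t).
Proof.
  intros Ht. unfold Rdiv. rewrite Rmult_1_l, ln_Rinv by lra.
  assert (ln t < -1) by (rewrite <- (ln_exp (-1)); apply ln_increasing; lra).
  lra.
Qed.

Lemma fxlog2_admissible_second_difference_le t u v :
  0 < t < exp (-1) -> 0 <= u <= 1 -> 0 <= v <= 1 ->
  Rabs (u - v) <= 2 * t * phiDT ((u + v) / 2) ->
  Rabs (fxlog2 u + fxlog2 v - 2 * fxlog2 ((u + v) / 2)) <= 20 * (t ^ 2 * ln (1 / t)).
Proof.
  intros Ht Hu Hv Huv. set (m := (u + v) / 2) in *.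
  pose proof (one_lt_ln_inv t Ht) as HL. set (L := ln (1 / t)) in *.
  destruct (Req_dec m 0) as [Hm0|Hm0].
  { assert (u = 0 /\ v = 0) as [-> ->] by (unfold m in Hm0; lra).
    rewrite Hm0, !fxlog2_eq, Rmult_0_l, Rmult_0_r, Rplus_0_r, Rminus_0_r, Rabs_R0.
    nra. }
  assert (Hm : 0 < m <= 1) by (unfold m in *; lra).
  set (S := (u - v) ^ 2 / (2 * m)).
  pose proof (admissible_sqr_le t u v m ltac:(lra) Huv).
  assert (HS : 0 <= S <= 2 * t ^ 2).
  { split; [apply Rdiv_le_0_compat; [apply pow2_ge_0 | lra] | apply Rle_div_l; nra]. }
  assert (HSm : t ^ 2 / m * S <= 2 * t ^ 2).
  { assert (S <= 2 * m) by (apply Rle_div_l; unfold m in *; nra).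
    replace (t ^ 2 / m * S) with (t ^ 2 * (S / m)) by (field; lra).
    assert (S / m <= 2) by (apply Rle_div_l; lra). nra. }
  assert (Hln : Rabs (ln m) = - ln m).
  { apply Rabs_left1. rewrite <- ln_1. apply ln_le; lra. }
  assert (- ln m * S <= 2 * L * S + t ^ 2 / m * S).
  { rewrite <- Rmult_plus_distr_r. apply Rmult_le_compat_r; [lra|].
    exact (neg_ln_le t m (proj1 Ht) (proj1 Hm)). }
  eapply Rle_trans; [apply (fxlog2_second_difference_le u v m); unfold m in *; lra|].
  fold S. rewrite Hln. nra.
Qed.

Theorem mainTheorem8 :
  exists C delta : R, 0 < delta /\
    forall t : R, 0 < t < delta ->
      Rbar_le (omega2_phi fxlog2 phiDT t) (Finite (C * (t ^ 2 * ln (1 / t)))).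
Proof.
  exists 20, (exp (-1)). split; [apply exp_pos|].
  intros t Ht. apply (proj2 (Lub_Rbar_correct _)).
  intros y (u & v & Hu & Hv & Huv & ->).
  exact (fxlog2_admissible_second_difference_le t u v Ht Hu Hv Huv).
Qed.
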